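(* Consider the feasible set $F$ of the distributionally robust chance-constrained bin packing problem: all $(z,y)$ with $z\in\{0,1\}^I$, $y=(y_{ij})\in\{0,1\}^{I\times J}$ satisfying $y_{ij}\le\rho_{ij}z_i$ for all $i\in[I],j\in[J]$, $\sum_{i=1}^I y_{ij}=1$ for all $j\in[J]$, and, for each $i\in[I]$, the chance constraint $\inf_{\mathbb{P}\in\mathcal{D}}\mathbb{P}\{\sum_{j=1}^J\tilde t_{ij}y_{ij}\le T_i\}\ge1-\alpha_i$. Fix $i\in[I]$ and write $y_i=(y_{i1},\dots,y_{iJ})$. (a) Let $h:\{0,1\}^J\to\mathbb{R}$ be submodular with $h(0)=0$ such that every $(z,y)\in F$ satisfies $h(y_i)\le T_i$ (so that $\pi^{\top}y_i\le T_i$ is an extended polymatroid inequality for bin $i$ whenever $\pi\in\mathrm{EP}_h$). Then for every $\pi\in\mathrm{EP}_h$, the inequality $\pi^{\top}y_i\le T_i z_i$ is valid for $F$. (b) Let $v_i\in\{0,1\}^{J+J^2}$ be the lifted vector $v_i=(y_{i1},\dots,y_{iJ},w_{i11},\dots,w_{i1J},w_{i21},\dots,w_{iJJ})$ with $w_{ijk}=y_{ij}y_{ik}$, and let $h:\{0,1\}^{J+J^2}\to\mathbb{R}$ be submodular with $h(0)=0$ such that every $(z,y)\in F$ satisfies $h(v_i)\le T_i^2$. Then for every $\pi\in\mathrm{EP}_h$, the inequality $\pi^{\top}v_i\le T_i^2 z_i$ is valid for $F$.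
   Context: $[I]=\{1,\dots,I\}$ indexes bins with capacities $T_i\in\mathbb{R}$ and risk levels $\alpha_i\in(0,1)$; $[J]=\{1,\dots,J\}$ indexes items; $\rho_{ij}\in\{0,1\}$ indicates whether item $j$ may be assigned to bin $i$; $z_i=1$ iff bin $i$ is open; $y_{ij}=1$ iff item $j$ is assigned to bin $i$; $\tilde t_{ij}$ are random item weights whose joint distribution $\mathbb{P}$ ranges over an ambiguity set $\mathcal{D}$. Binary vectors are identified with subsets. A set function $h$ on subsets of a ground set $N$ is submodular if $h(R\cup\{j\})-h(R)\ge h(S\cup\{j\})-h(S)$ for all $R\subseteq S\subseteq N$, $j\in N\setminus S$. For such $h$, the extended polymatroid is $\mathrm{EP}_h=\{\pi\in\mathbb{R}^{N}:\ \sum_{j\in R}\pi_j\le h(R)\ \forall R\subseteq N\}$. An inequality is valid for $F$ if every point of $F$ satisfies it. *)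

From HB Require Import structures.
From mathcomp Require Import all_boot all_order all_algebra.
From mathcomp Require Import all_classical all_reals.
From mathcomp Require Import ereal measure lebesgue_measure probability.
Set Implicit Arguments. Unset Strict Implicit. Unset Printing Implicit Defensive.
Import Order.TTheory GRing.Theory Num.Theory.
Local Open Scope ring_scope.
Local Open Scope classical_set_scope.

Definition submodular {R : realType} {N : finType} (h : {set N} -> R) : Prop :=
  forall (A B : {set N}) (j : N), A \subset B -> j \notin B ->
    h (j |: B) - h B <= h (j |: A) - h A.

Definition EP {R : realType} {N : finType} (h : {set N} -> R) (pi : N -> R) : Prop :=
  forall A : {set N}, \sum_(j in A) pi j <= h A.

(* pi^T x for a 0/1 vector x identified with a subset. *)
Definition dotset {R : realType} {N : finType} (pi : N -> R) (A : {set N}) : R :=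
  \sum_(j in A) pi j.

Definition feasible {R : realType} {d : measure_display} {Omega : measurableType d}
  (nI nJ : nat) (T : 'I_nI -> R) (alpha : 'I_nI -> R)
  (rho : 'I_nI -> 'I_nJ -> bool)
  (t : 'I_nI -> 'I_nJ -> Omega -> R) (D : set (probability Omega R))
  (z : 'I_nI -> bool) (y : 'I_nI -> 'I_nJ -> bool) : Prop :=
  [/\ (forall i j, (y i j : nat) <= (rho i j : nat) * (z i : nat))%N,
      (forall j, (\sum_(i < nI) (y i j : nat))%N = 1%N) &
      (forall i, ((1 - alpha i)%:E <=
         ereal_inf [set (P [set w | (\sum_(j < nJ) t i j w * (y i j)%:R <= T i)%R])
                   | P in D])%E)].

Definition yrow (nI nJ : nat) (y : 'I_nI -> 'I_nJ -> bool) (i : 'I_nI) : {set 'I_nJ} :=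
  [set j | y i j].

(* Lifted vector v_i in {0,1}^{J + J^2}: coordinates indexed by 'I_J + 'I_J * 'I_J,
   with w_ijk = y_ij y_ik. *)
Definition vrow (nI nJ : nat) (y : 'I_nI -> 'I_nJ -> bool) (i : 'I_nI)
  : {set ('I_nJ + 'I_nJ * 'I_nJ)%type} :=
  [set x | match x with
           | inl j => y i j
           | inr jk => y i jk.1 && y i jk.2
           end].

From HB Require Import structures.
From mathcomp Require Import all_boot all_order all_algebra.
From mathcomp Require Import all_classical all_reals.
From mathcomp Require Import ereal measure lebesgue_measure probability.
Import Order.TTheory GRing.Theory Num.Theory.
Local Open Scope ring_scope.

(* If bin i is open, pi^T y_i <= h(y_i) <= T_i because pi lies in EP_h; if it is
   closed, the assignment constraints y_ij <= rho_ij z_i force y_i = 0, and both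
   sides vanish.  The same argument applies to the lifted vector v_i, which is
   0 as soon as y_i is. *)

Lemma dotset_set0 (R : realType) (N : finType) (pi : N -> R) :
  dotset pi finset.set0 = 0.
Proof. by rewrite /dotset big_set0. Qed.

Lemma EP_dotset_le_open (R : realType) (N : finType) (h : {set N} -> R)
    (pi : N -> R) (A : {set N}) (c : R) (open : bool) :
  EP h pi -> h A <= c -> (~~ open -> A = finset.set0) ->
  dotset pi A <= c * open%:R.
Proof.
move=> hpi hA; case: open => [_|/(_ isT) ->].
  by rewrite mulr1; exact: le_trans (hpi A) hA.
by rewrite mulr0 dotset_set0.
Qed.

Section ClosedBin.

Variables (R : realType) (d : measure_display) (Omega : measurableType d).
Variables (nI nJ : nat) (T alpha : 'I_nI -> R) (rho : 'I_nI -> 'I_nJ -> bool).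
Variables (t : 'I_nI -> 'I_nJ -> Omega -> R) (D : set (probability Omega R)).

Lemma feasible_yrow_closed z y i :
  feasible T alpha rho t D z y -> ~~ z i -> yrow y i = finset.set0.
Proof.
case=> hy _ _ /negbTE hz; apply/setP => j; rewrite !inE.
by move: (hy i j); rewrite hz muln0; case: (y i j).
Qed.

Lemma vrow_eq0 (y : 'I_nI -> 'I_nJ -> bool) i :
  yrow y i = finset.set0 -> vrow y i = finset.set0.
Proof.
move/setP=> y0; apply/setP => -[j|[j k]]; rewrite !inE /=.
  by move: (y0 j); rewrite !inE.
by move: (y0 j); rewrite !inE => ->.
Qed.

End ClosedBin.

Theorem proposition4 (R : realType) (d : measure_display) (Omega : measurableType d)
  (nI nJ : nat) (T : 'I_nI -> R) (alpha : 'I_nI -> R)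
  (halpha : forall i, 0 < alpha i < 1)
  (rho : 'I_nI -> 'I_nJ -> bool)
  (t : 'I_nI -> 'I_nJ -> Omega -> R)
  (ht : forall i j, measurable_fun setT (t i j))
  (D : set (probability Omega R)) (i : 'I_nI) :
  (forall h : {set 'I_nJ} -> R, submodular h -> h finset.set0 = 0 ->
     (forall z y, feasible T alpha rho t D z y -> h (yrow y i) <= T i) ->
     forall pi : 'I_nJ -> R, EP h pi ->
     forall z y, feasible T alpha rho t D z y ->
       dotset pi (yrow y i) <= T i * (z i)%:R)
  /\
  (forall h : {set ('I_nJ + 'I_nJ * 'I_nJ)%type} -> R, submodular h -> h finset.set0 = 0 ->
     (forall z y, feasible T alpha rho t D z y -> h (vrow y i) <= T i ^+ 2) ->
     forall pi : ('I_nJ + 'I_nJ * 'I_nJ)%type -> R, EP h pi ->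
     forall z y, feasible T alpha rho t D z y ->
       dotset pi (vrow y i) <= T i ^+ 2 * (z i)%:R).
Proof.
split=> h _ _ hT pi hpi z y hf; apply: EP_dotset_le_open hpi (hT _ _ hf) _.
  exact: feasible_yrow_closed hf.
by move=> hz; apply: vrow_eq0; exact: feasible_yrow_closed hf hz.
Qed.
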